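(* Suppose $\Omega\in\mathcal U^+(3)$ is of the form \[\Omega=\alpha dz_{123}+\beta_1dz_{\overline123}+\beta_2dz_{1\overline23}+\beta_3dz_{12\overline3}+\gamma_1dz_{1\overline{23}}+\gamma_2dz_{\overline12\overline3}+\gamma_3dz_{\overline{12}3}+\delta dz_{\overline{123}}\] with complex coefficients. Then $\alpha\ne0$ and the cubic polynomial $P(z)=\alpha z^3+(\beta_1+\beta_2+\beta_3)z^2+(\gamma_1+\gamma_2+\gamma_3)z+\delta$ has all its roots in the open unit disk. In particular $|\delta/\alpha|<1$.
   Context: $\mathbb R^6$ has coordinates $x_1,y_1,x_2,y_2,x_3,y_3$, $\omega=\sum_jdx_j\wedge dy_j$, $z_j=x_j+iy_j$; $dz_I$ denotes $dz_1\wedge dz_2\wedge dz_3$ with $dz_j$ replaced by $d\bar z_j$ for each overlined index $j$. $\mathcal U(3)$ is the set of $\Omega\in\bigwedge^3(\mathbb R^6)^*\otimes\mathbb C$ with $\Omega\wedge\omega=0$ and $\Omega|_L\ne0$ for all Lagrangian subspaces $L$; $\mathcal U^+(3)$ is its connected component containing $(3,0)$-forms for some $\omega$-compatible complex structure. *)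

From HB Require Import structures.
From mathcomp Require Import all_boot all_order all_algebra all_fingroup.
From mathcomp Require Import all_classical all_reals all_analysis.
From mathcomp Require Import complex.
Set Implicit Arguments. Unset Strict Implicit. Unset Printing Implicit Defensive.
Import Order.TTheory GRing.Theory Num.Theory.
Import numFieldNormedType.Exports.
Local Open Scope ring_scope.
Local Open Scope complex_scope.

Section SL.
Variable R : realType.

(* R^6 = row vectors 'rV[R]_6 with coordinates ordered x1,y1,x2,y2,x3,y3:
   coordinate x_j has index 2j, y_j has index 2j+1 (j = 0,1,2). *)
Definition xi (j : 'I_3) : 'I_6 := inord (2 * j).
Definition yi (j : 'I_3) : 'I_6 := inord (2 * j).+1.

Definition ebase (k : 'I_6) : 'rV[R]_6 := delta_mx 0 k.

Definition omega (u v : 'rV[R]_6) : R :=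
  \sum_(j < 3) (u 0 (xi j) * v 0 (yi j) - u 0 (yi j) * v 0 (xi j)).

(* The (finite-dimensional) complex vector space of complex-valued trilinear
   forms on R^6, given by their components Om (i,j,k) = Om(e_i,e_j,e_k),
   with its natural (product = Euclidean) topology. *)
Definition form3 := {ptws ('I_6 * 'I_6 * 'I_6)%type -> (R[i])^o}.

Definition ev3 (Om : form3) (u v w : 'rV[R]_6) : R[i] :=
  \sum_(i < 6) \sum_(j < 6) \sum_(k < 6)
     (Om (i, j, k) : R[i]) * (u 0 i)%:C * (v 0 j)%:C * (w 0 k)%:C.

(* Om is alternating, i.e. an element of /\^3 (R^6)^* (x) C *)
Definition is_form3 (Om : form3) : Prop :=
  forall i j k, Om (i, j, k) = - Om (j, i, k) /\ Om (i, j, k) = - Om (i, k, j).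

(* Om /\ omega = 0: the alternating 5-form
   (v1..v5) |-> sum_{s in S_5} sgn(s) Om(v_s1,v_s2,v_s3) omega(v_s4,v_s5)
   (a nonzero constant multiple of Om /\ omega) vanishes on all basis 5-tuples. *)
Definition wedge_omega_zero (Om : form3) : Prop :=
  forall f : 'I_5 -> 'I_6,
    \sum_(s : 'S_5) (-1) ^+ s *
       (Om (f (s (inord 0)), f (s (inord 1)), f (s (inord 2))) : R[i]) *
       (omega (ebase (f (s (inord 3)))) (ebase (f (s (inord 4)))))%:C = 0.

Definition lagrangian (L : {vspace 'rV[R]_6}) : Prop :=
  (\dim L = 3)%N /\ forall u v, u \in L -> v \in L -> omega u v = 0.

Definition U3 : set form3 :=
  [set Om | [/\ is_form3 Om, wedge_omega_zero Om &
     forall L : {vspace 'rV[R]_6}, lagrangian L ->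
       exists u v w, [/\ u \in L, v \in L, w \in L & ev3 Om u v w != 0]]].

Definition compatible_cs (J : 'M[R]_6) : Prop :=
  [/\ J *m J = - 1%:M,
      forall u v, omega (u *m J) (v *m J) = omega u v &
      forall u, u != 0 -> 0 < omega u (u *m J)].

Definition type30 (J : 'M[R]_6) (Om : form3) : Prop :=
  is_form3 Om /\ forall u v w, ev3 Om (u *m J) v w = 'i * ev3 Om u v w.

Definition Uplus3 : set form3 :=
  [set Om | exists (J : 'M[R]_6) (Om0 : form3),
     [/\ compatible_cs J, type30 J Om0 & connected_component U3 Om0 Om]].

Definition dz (j : 'I_3) (u : 'rV[R]_6) : R[i] :=
  (u 0 (xi j))%:C + 'i * (u 0 (yi j))%:C.
Definition dzb (j : 'I_3) (u : 'rV[R]_6) : R[i] :=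
  (u 0 (xi j))%:C - 'i * (u 0 (yi j))%:C.

(* wedge of three complex 1-forms (determinant convention) *)
Definition wedge3 (t1 t2 t3 : 'rV[R]_6 -> R[i]) (u v w : 'rV[R]_6) : R[i] :=
    t1 u * t2 v * t3 w - t1 u * t2 w * t3 v - t1 v * t2 u * t3 w
  + t1 v * t2 w * t3 u + t1 w * t2 u * t3 v - t1 w * t2 v * t3 u.

Definition o0 : 'I_3 := inord 0.
Definition o1 : 'I_3 := inord 1.
Definition o2 : 'I_3 := inord 2.

End SL.

From HB Require Import structures.
From mathcomp Require Import all_boot all_order all_algebra all_fingroup.
From mathcomp Require Import all_classical all_reals all_analysis.
From mathcomp Require Import complex.
From mathcomp Require Import ring lra zify.
Import Order.TTheory GRing.Theory Num.Theory.
Set Implicit Arguments. Unset Strict Implicit. Unset Printing Implicit Defensive.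
Local Open Scope ring_scope.

(* For w in the closed unit disk let W(w) be the complex 3-plane spanned by
   wvec w a = (1 + w) e_(x_a) - i (1 - w) e_(y_a), a = 1, 2, 3.  Then
   Q_Om(w) = Om (wvec w 1, wvec w 2, wvec w 3) is a polynomial [wpoly Om] of
   degree at most 3 in w, and for Om as in the statement
   Q_Om(w) = 8 (alpha + B w + C w^2 + delta w^3), where B and C are the sums of
   the beta's and of the gamma's.  Let S ([zero_free_forms]) be the set of forms
   Om such that Q_Om has no zero in the closed disk.
   - S contains the (3,0)-forms of every compatible J: omega (Re Y, Im Y) is
     positive on the nonzero vectors of the (-i)-eigenspace K of J and
     nonpositive on W(w), so C^6 = K + W(w); a (3,0)-form vanishes as soon as
     one argument lies in K, so Q_Om(w) = 0 would force Om = 0.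
   - S is open, and S meets U(3) in a relatively closed set: for |w| = 1, W(w)
     is the complexification of a real Lagrangian plane, so Q_Om(w) <> 0 on the
     circle, and a Harnack-type inequality for zero-free polynomials of degree 3
     keeps zeros from entering the open disk in the limit.
   Hence S contains the connected component U^+(3), and Q_Om(w) <> 0 on the
   closed disk says that the roots 1/w of P lie in the open disk. *)

Section DiskPolynomials.
Variable C : numClosedFieldType.
Implicit Types (p q : {poly C}) (v w z : C).

Definition disk_zero_free p := forall w, `|w| <= 1 -> p.[w] != 0.

Lemma disk_zero_free_factor p : disk_zero_free p ->
  exists r : seq C, [/\ lead_coef p != 0, (size r = (size p).-1)%N,
    {in r, forall z, 1 < `|z|} &
    forall w, p.[w] = lead_coef p * \prod_(z <- r) (w - z)].
Proof.
move=> hp; have [r pE] := closed_field_poly_normal p.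
have lp0 : lead_coef p != 0.
  rewrite lead_coef_eq0; apply: contraTneq (hp 0 _) => [->|].
    by rewrite horner0 eqxx.
  by rewrite normr0 ler01.
exists r; split=> //.
- by rewrite [in RHS]pE size_scale // size_prod_XsubC.
- move=> z zr; rewrite real_ltNge ?normr_real //; apply/negP => /hp/negP; apply.
  by rewrite -rootE pE rootZ // root_prod_XsubC.
- by move=> w; rewrite {1}pE hornerZ horner_prod; under eq_bigr do rewrite hornerXsubC.
Qed.

Lemma disk_zero_free_lb p : disk_zero_free p ->
  exists2 m, 0 < m & forall w, `|w| <= 1 -> m <= `|p.[w]|.
Proof.
move=> /disk_zero_free_factor[r [lp0 _ r_out pE]].
exists (`|lead_coef p| * \prod_(z <- r) (`|z| - 1)).
  by rewrite mulr_gt0 ?normr_gt0 // big_seq prodr_gt0 // => z /r_out; rewrite subr_gt0.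
move=> w w1; rewrite pE normrM normr_prod ler_pM2l ?normr_gt0 // big_seq [leRHS]big_seq.
apply: ler_prod => z /r_out z1; rewrite subr_ge0 ltW //=.
by rewrite distrC (le_trans _ (lerB_dist _ _)) // lerB.
Qed.

Lemma half_gap_bounds w : `|w| <= 1 -> 0 <= (1 - `|w|) / 2 <= 1.
Proof.
move=> w1; have gap_le1 : 1 - `|w| <= 1 by rewrite lerBlDr lerDl.
by rewrite divr_ge0 ?subr_ge0 //= ler_pdivrMr // mul1r (le_trans gap_le1) ?ler1n.
Qed.

Lemma root_dist_harnack v w z : `|v| <= 1 -> `|w| <= 1 -> 1 < `|z| ->
  (1 - `|w|) / 2 * `|v - z| <= `|w - z|.
Proof.
move=> v1 w1 z1.
have vz : `|v - z| <= 2 * `|z|.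
  by rewrite (le_trans (ler_normB _ _)) // mulr2n mulrDl mul1r lerD2r (le_trans v1) ?ltW.
have wz : (1 - `|w|) * `|z| <= `|w - z|.
  rewrite distrC (le_trans _ (lerB_dist _ _)) // mulrBl mul1r lerB //.
  by rewrite ler_peMr // ltW.
rewrite (le_trans _ wz) // mulrAC -mulrA ler_wpM2l ?subr_ge0 //.
by rewrite ler_pdivrMr // mulrC.
Qed.

Lemma prod_root_dist_harnack (r : seq C) v w : {in r, forall z, 1 < `|z|} ->
  `|v| <= 1 -> `|w| <= 1 ->
  ((1 - `|w|) / 2) ^+ size r * `|\prod_(z <- r) (v - z)| <= `|\prod_(z <- r) (w - z)|.
Proof.
move=> r_out v1 w1; elim: r r_out => [|z r IH] r_out; first by rewrite !big_nil mul1r.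
rewrite !big_cons !normrM exprS mulrACA ler_pM //.
- by rewrite mulr_ge0 ?(andP (half_gap_bounds w1)).1.
- by rewrite mulr_ge0 ?exprn_ge0 ?(andP (half_gap_bounds w1)).1.
- by rewrite root_dist_harnack // r_out ?mem_head.
- by apply: IH => y yr; rewrite r_out // inE yr orbT.
Qed.

Lemma disk_zero_free_harnack n p v w : (size p <= n.+1)%N -> disk_zero_free p ->
  `|v| <= 1 -> `|w| <= 1 -> ((1 - `|w|) / 2) ^+ n * `|p.[v]| <= `|p.[w]|.
Proof.
move=> sp /disk_zero_free_factor[r [lp0 sr r_out pE]] v1 w1.
have /andP[k0 k1] := half_gap_bounds w1.
rewrite !pE !normrM mulrCA ler_pM2l ?normr_gt0 //.
apply: le_trans (prod_root_dist_harnack r_out v1 w1); apply: ler_wpM2r => //.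
by apply: ler_wiXn2l => //; rewrite sr; lia.
Qed.

Lemma disk_zero_free_near p : disk_zero_free p -> exists2 e, 0 < e &
  forall q, (forall v, `|v| <= 1 -> `|q.[v] - p.[v]| <= e) -> disk_zero_free q.
Proof.
move=> /disk_zero_free_lb[m m0 p_lb]; exists (m / 2); first by rewrite divr_gt0.
move=> q close v v1; apply/eqP => qv0.
have := close v v1; rewrite qv0 sub0r normrN => /(le_trans (p_lb v v1)).
by have := (midf_lt m0).2; rewrite add0r => /lt_le_trans/[apply]; rewrite ltxx.
Qed.

Lemma disk_zero_free_approx_root n p q w : (size q <= n.+1)%N -> disk_zero_free q ->
  `|w| < 1 -> p.[w] = 0 ->
  (forall v, `|v| <= 1 -> `|q.[v] - p.[v]| <= ((1 - `|w|) / 2) ^+ n * `|p.[1]| / 4) ->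
  p.[1] = 0.
Proof.
move=> sq q_zf w_lt1 pw0 close; apply/eqP; apply: contraT => p1_neq0.
have w1 := ltW w_lt1; have one1 : `|1 : C| <= 1 by rewrite normr1.
set k := ((1 - `|w|) / 2) ^+ n; set e := k * `|p.[1]| / 4.
have k_gt0 : 0 < k by rewrite exprn_gt0 // divr_gt0 // subr_gt0.
have k_le1 : k <= 1 by have /andP[? ?] := half_gap_bounds w1; rewrite exprn_ile1.
have kA_gt0 : 0 < k * `|p.[1]| by rewrite mulr_gt0 // normr_gt0.
have e_ge0 : 0 <= e by rewrite divr_ge0 // ltW.
have q1_lb : `|p.[1]| <= `|q.[1]| + e.
  have -> : p.[1] = q.[1] - (q.[1] - p.[1]) by rewrite opprB addrC subrK.
  by rewrite (le_trans (ler_normB _ _)) // lerD2l close.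
have q1_ub : k * `|q.[1]| <= e.
  by rewrite (le_trans (disk_zero_free_harnack sq q_zf one1 w1)) // -[q.[w]]subr0 -pw0 close.
have : k * `|p.[1]| <= e + e.
  rewrite (le_trans (ler_wpM2l (ltW k_gt0) q1_lb)) // mulrDr lerD //.
  by rewrite ler_piMl.
have -> : e + e = k * `|p.[1]| / 2 by rewrite /e; field.
by have := (midf_lt kA_gt0).2; rewrite add0r => /lt_le_trans/[apply]; rewrite ltxx.
Qed.

Lemma roots_in_disk_coef0 p : (1 < size p)%N ->
  (forall z, root p z -> `|z| < 1) -> `|p.[0] / lead_coef p| < 1.
Proof.
move=> sp p_in; have [r pE] := closed_field_poly_normal p.
have lp0 : lead_coef p != 0 by rewrite lead_coef_eq0 -size_poly_gt0 ltnW.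
have r_in z : z \in r -> `|z| < 1.
  by move=> zr; apply: p_in; rewrite pE rootZ // root_prod_XsubC.
have [z [r' rE]] : exists z r', r = z :: r'.
  case: r pE {r_in} => [|z r' _]; last by exists z, r'.
  by move=> pE; move: sp; rewrite pE size_scale // big_nil size_poly1.
rewrite {1}pE hornerZ mulrC mulKf // horner_prod normr_prod rE big_cons.
under eq_bigr do rewrite hornerXsubC sub0r normrN.
rewrite hornerXsubC sub0r normrN (le_lt_trans _ (r_in z _)) ?rE ?mem_head //.
rewrite ler_piMr // big_seq prodr_ile1 // => y yr.
by rewrite normr_ge0 ltW // r_in // rE inE yr orbT.
Qed.

Lemma reversed_cubic_zero_free (a b c d : C) :
  (forall w, `|w| <= 1 -> a + b * w + c * w ^+ 2 + d * w ^+ 3 != 0) ->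
  a != 0 /\
  (forall z, root (a *: 'X^3 + b *: 'X^2 + c *: 'X + d%:P) z -> `|z| < 1) /\
  `|d / a| < 1.
Proof.
move=> rev_zf; set P := _ + d%:P.
have a0 : a != 0.
  by have := rev_zf 0; rewrite normr0 ler01 => /(_ isT); apply: contraNneq => ->; apply/eqP; ring.
have P_in z : root P z -> `|z| < 1.
  rewrite rootE !(hornerD, hornerZ, hornerXn, hornerX, hornerC) => /eqP Pz0.
  rewrite real_ltNge ?normr_real //.
  apply/negP => z1; have z0 : z != 0 by apply: contraTneq z1 => ->; rewrite normr0 ler10.
  have := rev_zf z^-1; rewrite normfV invf_le1 ?normr_gt0 // => /(_ z1)/negP; apply.
  apply/eqP; rewrite -[RHS](mulr0 (z ^- 3)) -Pz0; field; exact: z0.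
have s2 : (size (b *: 'X^2 : {poly C}) < 4)%N.
  by rewrite (leq_ltn_trans (size_scale_leq _ _)) // size_polyXn.
have s1 : (size (c *: 'X : {poly C}) < 4)%N.
  by rewrite (leq_ltn_trans (size_scale_leq _ _)) // size_polyX.
have s0 : (size d%:P < 4)%N by rewrite (leq_ltn_trans (size_polyC_leq1 _)).
have sP3 : size (a *: 'X^3 : {poly C}) = 4 by rewrite size_scale // size_polyXn.
have sP2 : size (a *: 'X^3 + b *: 'X^2) = 4 by rewrite size_polyDl sP3.
have sP1 : size (a *: 'X^3 + b *: 'X^2 + c *: 'X) = 4 by rewrite size_polyDl sP2.
have sP : size P = 4 by rewrite size_polyDl sP1.
have lP : lead_coef P = a.
  rewrite lead_coefDl ?sP1 // lead_coefDl ?sP2 // lead_coefDl ?sP3 //.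
  by rewrite lead_coefZ lead_coefXn mulr1.
split=> //; split=> //.
have P0 : P.[0] = d by rewrite !(hornerD, hornerZ, hornerXn, hornerX, hornerC); ring.
by rewrite -lP -P0 roots_in_disk_coef0 ?sP.
Qed.

End DiskPolynomials.

Section Trilinear.
Variables (K : numFieldType) (V : lmodType K).
Implicit Types (F : V -> V -> V -> K) (X : 'I_3 -> V) (Y Z W : V).

Record trilinear F : Prop := Trilinear {
  trilinearDl Y Y' Z W : F (Y + Y') Z W = F Y Z W + F Y' Z W;
  trilinearZl c Y Z W : F (c *: Y) Z W = c * F Y Z W;
  trilinearDm Y Z Z' W : F Y (Z + Z') W = F Y Z W + F Y Z' W;
  trilinearZm c Y Z W : F Y (c *: Z) W = c * F Y Z W;
  trilinearDr Y Z W W' : F Y Z (W + W') = F Y Z W + F Y Z W';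
  trilinearZr c Y Z W : F Y Z (c *: W) = c * F Y Z W }.

Definition alternating3 F :=
  (forall Y Z W, F Y Z W = - F Z Y W) /\ (forall Y Z W, F Y Z W = - F Y W Z).

Section Sums.
Variables (F : V -> V -> V -> K) (I : finType) (c : I -> K) (X : I -> V).
Hypothesis F_tri : trilinear F.

Lemma trilinear_suml Z W : F (\sum_i c i *: X i) Z W = \sum_i c i * F (X i) Z W.
Proof.
have F0 : F 0 Z W = 0 by rewrite -(scale0r 0) trilinearZl // mul0r.
rewrite (big_morph (fun Y => F Y Z W) (fun Y Y' => trilinearDl F_tri Y Y' Z W) F0).
by apply: eq_bigr => i _; rewrite trilinearZl.
Qed.

Lemma trilinear_summ Y W : F Y (\sum_i c i *: X i) W = \sum_i c i * F Y (X i) W.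
Proof.
have F0 : F Y 0 W = 0 by rewrite -(scale0r 0) trilinearZm // mul0r.
rewrite (big_morph (fun Z => F Y Z W) (fun Z Z' => trilinearDm F_tri Y Z Z' W) F0).
by apply: eq_bigr => i _; rewrite trilinearZm.
Qed.

Lemma trilinear_sumr Y Z : F Y Z (\sum_i c i *: X i) = \sum_i c i * F Y Z (X i).
Proof.
have F0 : F Y Z 0 = 0 by rewrite -(scale0r 0) trilinearZr // mul0r.
rewrite (big_morph (fun W => F Y Z W) (fun W W' => trilinearDr F_tri Y Z W W') F0).
by apply: eq_bigr => i _; rewrite trilinearZr.
Qed.

End Sums.

Lemma ord3P (a : 'I_3) : [\/ a = o0, a = o1 | a = o2].
Proof.
by case: a => -[|[|[|//]]] lt_a3; [constructor 1|constructor 2|constructor 3];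
  apply: val_inj; rewrite /= inordK.
Qed.

Lemma alternating_span0 F X (c1 c2 c3 : 'I_3 -> K) : trilinear F -> alternating3 F ->
  F (X o0) (X o1) (X o2) = 0 ->
  F (\sum_a c1 a *: X a) (\sum_a c2 a *: X a) (\sum_a c3 a *: X a) = 0.
Proof.
move=> F_tri [F12 F23] F0.
have self_opp (x : K) : x = - x -> x = 0.
  by move/eqP; rewrite -subr_eq0 opprK -mulr2n mulrn_eq0 => /eqP.
have F11 Y W : F Y Y W = 0 by apply: self_opp; rewrite {1}F12.
have F22 Y Z : F Y Z Z = 0 by apply: self_opp; rewrite {1}F23.
have F13 Y Z : F Y Z Y = 0 by rewrite F23 F11 oppr0.
have Fabc a b c : F (X a) (X b) (X c) = 0.
  (* Either two indices coincide or (a, b, c) permutes (o0, o1, o2). *)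
  case: (ord3P a) => ->; case: (ord3P b) => ->; case: (ord3P c) => ->;
  first [ by rewrite F11 | by rewrite F22 | by rewrite F13 | exact: F0
        | by rewrite F12 F0 oppr0 | by rewrite F23 F0 oppr0
        | by rewrite F12 F23 F0 !oppr0 | by rewrite F23 F12 F0 !oppr0
        | by rewrite F12 F23 F12 F0 !oppr0 ].
rewrite trilinear_suml //; apply: big1 => a _.
rewrite trilinear_summ // big1 ?mulr0 // => b _.
by rewrite trilinear_sumr // big1 ?mulr0 // => c _; rewrite Fabc mulr0.
Qed.

End Trilinear.

Lemma sumr_delta (K : pzSemiRingType) (I : finType) (F : I -> K) i :
  \sum_m F m * (m == i)%:R = F i.
Proof. by under eq_bigr do rewrite mulr_natr mulrb; rewrite -big_mkcond big_pred1_eq. Qed.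

Lemma xi_val j : val (xi j) = (2 * j)%N.
Proof. by rewrite /= inordK //; case: j => -[|[|[|]]]. Qed.

Lemma yi_val j : val (yi j) = (2 * j).+1%N.
Proof. by rewrite /= inordK //; case: j => -[|[|[|]]]. Qed.

Lemma eq_xi a b : (xi a == xi b) = (a == b).
Proof. by apply/eqP/eqP => [/(congr1 val)|->//]; rewrite !xi_val => ?; apply: ord_inj; lia. Qed.

Lemma eq_yi a b : (yi a == yi b) = (a == b).
Proof. by apply/eqP/eqP => [/(congr1 val)|->//]; rewrite !yi_val => ?; apply: ord_inj; lia. Qed.

Lemma eq_xi_yi a b : (xi a == yi b) = false.
Proof. by apply/negbTE; rewrite -val_eqE xi_val yi_val; apply/eqP; lia. Qed.

Lemma eq_yi_xi a b : (yi a == xi b) = false.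
Proof. by rewrite eq_sym eq_xi_yi. Qed.

Section PlaneVectors.
Variable K : pzRingType.
Implicit Types (p q : K) (k : 'I_3 -> K).

Definition pvec p q (a : 'I_3) : 'rV[K]_6 := p *: delta_mx 0 (xi a) + q *: delta_mx 0 (yi a).

Lemma pvec_xi p q a j : pvec p q a 0 (xi j) = p * (a == j)%:R.
Proof. by rewrite !mxE eqxx eq_xi eq_xi_yi mulr0 addr0 eq_sym. Qed.

Lemma pvec_yi p q a j : pvec p q a 0 (yi j) = q * (a == j)%:R.
Proof. by rewrite !mxE eqxx eq_yi eq_yi_xi mulr0 add0r eq_sym. Qed.

Lemma sum_pvec_xi p q k j : (\sum_a k a *: pvec p q a) 0 (xi j) = k j * p.
Proof.
rewrite summxE -(sumr_delta (fun a => k a * p)).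
by apply: eq_bigr => a _; rewrite mxE pvec_xi mulrA.
Qed.

Lemma sum_pvec_yi p q k j : (\sum_a k a *: pvec p q a) 0 (yi j) = k j * q.
Proof.
rewrite summxE -(sumr_delta (fun a => k a * q)).
by apply: eq_bigr => a _; rewrite mxE pvec_yi mulrA.
Qed.

Lemma pvecZ c p q a : pvec (c * p) (c * q) a = c *: pvec p q a.
Proof. by rewrite /pvec scalerDr !scalerA. Qed.

End PlaneVectors.

Lemma pvec_free (K : idomainType) (p q : K) (k : 'I_3 -> K) :
  (p != 0) || (q != 0) -> \sum_a k a *: pvec p q a = 0 -> forall a, k a = 0.
Proof.
move=> pq k0 a; have := sum_pvec_xi p q k a; have := sum_pvec_yi p q k a.
rewrite k0 !mxE => /esym/eqP; rewrite mulf_eq0 => /orP[/eqP //|q0].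
move=> /esym/eqP; rewrite mulf_eq0 => /orP[/eqP //|p0].
by move: pq; rewrite p0 q0.
Qed.

Lemma map_pvec (K L : pzRingType) (f : {rmorphism K -> L}) p q a :
  map_mx f (pvec p q a) = pvec (f p) (f q) a.
Proof. by apply/rowP => k; rewrite !mxE rmorphD !rmorphM !rmorph_nat. Qed.

Section Complexification.
Variable R : realType.
Local Notation C := R[i].
Local Notation rowC := 'rV[C]_6.
Implicit Types (Om : form3 R) (u v w : 'rV[R]_6) (Y : rowC).

Definition cvec u : rowC := map_mx (real_complex R) u.

Definition ev3c Om (Y1 Y2 Y3 : rowC) : C :=
  \sum_(i < 6) \sum_(j < 6) \sum_(k < 6) (Om (i, j, k) : C) * Y1 0 i * Y2 0 j * Y3 0 k.

Lemma ev3c_cvec Om u v w : ev3 Om u v w = ev3c Om (cvec u) (cvec v) (cvec w).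
Proof.
by apply: eq_bigr => i _; apply: eq_bigr => j _; apply: eq_bigr => k _; rewrite !mxE.
Qed.

Lemma ev3c_trilinear Om : trilinear (ev3c Om).
Proof.
split=> *; rewrite /ev3c ?mulr_sumr -?big_split; apply: eq_bigr => i _;
  rewrite ?mulr_sumr -?big_split; apply: eq_bigr => j _;
  rewrite ?mulr_sumr -?big_split; apply: eq_bigr => k _; rewrite !mxE /=; ring.
Qed.

Lemma ev3c_alternating Om : is_form3 Om -> alternating3 (ev3c Om).
Proof.
move=> Om_alt; split=> Y Z W; rewrite /ev3c.
- rewrite [in RHS]exchange_big -sumrN; apply: eq_bigr => i _; rewrite -sumrN.
  apply: eq_bigr => j _; rewrite -sumrN; apply: eq_bigr => k _.
  by rewrite (proj1 (Om_alt i j k)); ring.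
- rewrite -sumrN; apply: eq_bigr => i _; rewrite [in RHS]exchange_big -sumrN.
  apply: eq_bigr => j _; rewrite -sumrN; apply: eq_bigr => k _.
  by rewrite (proj2 (Om_alt i j k)); ring.
Qed.

Lemma cvec_re_im Y : Y = cvec (map_mx (@complex.Re R) Y) + 'i *: cvec (map_mx (@complex.Im R) Y).
Proof. by apply/rowP => k; rewrite !mxE [LHS]complexE. Qed.

Lemma trilinear_eq_on_real (F G : rowC -> rowC -> rowC -> C) :
  trilinear F -> trilinear G ->
  (forall u v w, F (cvec u) (cvec v) (cvec w) = G (cvec u) (cvec v) (cvec w)) ->
  forall Y1 Y2 Y3, F Y1 Y2 Y3 = G Y1 Y2 Y3.
Proof.
move=> [F1 F2 F3 F4 F5 F6] [G1 G2 G3 G4 G5 G6] FG Y1 Y2 Y3.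
rewrite (cvec_re_im Y1) (cvec_re_im Y2) (cvec_re_im Y3).
by rewrite !(F1, F2, F3, F4, F5, F6) !(G1, G2, G3, G4, G5, G6) !FG.
Qed.

Lemma ev3c_delta Om i j k :
  ev3c Om (delta_mx 0 i) (delta_mx 0 j) (delta_mx 0 k) = Om (i, j, k).
Proof.
have deltaE m l : delta_mx 0 l 0 m = (m == l)%:R :> C by rewrite mxE eqxx.
rewrite /ev3c -(sumr_delta (fun m => (Om (m, j, k) : C)) i); apply: eq_bigr => m _.
rewrite -(sumr_delta (fun n => (Om (m, n, k) : C) * (m == i)%:R) j); apply: eq_bigr => n _.
rewrite -(sumr_delta (fun l => (Om (m, n, l) : C) * (m == i)%:R * (n == j)%:R) k).
by apply: eq_bigr => l _; rewrite !deltaE.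
Qed.

Lemma ev3_ebase Om i j k : ev3 Om (ebase R i) (ebase R j) (ebase R k) = Om (i, j, k).
Proof. by rewrite ev3c_cvec /cvec /ebase !map_delta_mx ev3c_delta. Qed.

Lemma cvec_span_pvec (p q : R) (k : 'I_3 -> R) :
  cvec (\sum_a k a *: pvec p q a) = \sum_a (k a)%:C%C *: pvec (p%:C)%C (q%:C)%C a.
Proof. by rewrite /cvec map_mx_sum; apply: eq_bigr => a _; rewrite map_mxZ map_pvec. Qed.

End Complexification.

Section LagrangianPlanes.
Variable R : realType.
Implicit Types (p q : R) (Om : form3 R).

Definition lag_plane p q : {vspace 'rV[R]_6} := <<[tuple pvec p q a | a < 3]>>%VS.

Lemma omega_span_pvec p q (k l : 'I_3 -> R) :
  omega (\sum_a k a *: pvec p q a) (\sum_a l a *: pvec p q a) = 0.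
Proof. by rewrite /omega big1 // => j _; rewrite !sum_pvec_xi !sum_pvec_yi; ring. Qed.

Lemma mem_lag_plane p q u : u \in lag_plane p q ->
  exists k : 'I_3 -> R, u = \sum_a k a *: pvec p q a.
Proof.
move=> /coord_span ->; eexists; apply: eq_bigr => a _.
by rewrite -tnth_nth tnth_mktuple.
Qed.

Lemma lag_plane_lagrangian p q : (p != 0) || (q != 0) -> lagrangian (lag_plane p q).
Proof.
move=> pq; split.
  have /eqP -> : free [tuple pvec p q a | a < 3].
    apply/freeP => k k0; apply: (pvec_free pq).
    by rewrite -[RHS]k0; apply: eq_bigr => a _; rewrite -tnth_nth tnth_mktuple.
  by rewrite size_tuple.
by move=> u v /mem_lag_plane[k ->] /mem_lag_plane[l ->]; apply: omega_span_pvec.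
Qed.

Lemma U3_pvec Om p q : U3 Om -> (p != 0) || (q != 0) ->
  ev3 Om (pvec p q o0) (pvec p q o1) (pvec p q o2) != 0.
Proof.
move=> [Om_alt _ Om_lag] pq; apply/eqP; rewrite ev3c_cvec /cvec !map_pvec => Om0.
have [u [v [w [/mem_lag_plane[k ->] /mem_lag_plane[l ->] /mem_lag_plane[m ->]]]]] :=
  Om_lag _ (lag_plane_lagrangian pq).
move=> /eqP; apply; rewrite ev3c_cvec !cvec_span_pvec.
by apply: alternating_span0 Om0; [exact: ev3c_trilinear | exact: ev3c_alternating].
Qed.

End LagrangianPlanes.

Lemma o0_neq_o1 : (o0 == o1) = false. Proof. by rewrite -val_eqE /= !inordK. Qed.
Lemma o0_neq_o2 : (o0 == o2) = false. Proof. by rewrite -val_eqE /= !inordK. Qed.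
Lemma o1_neq_o2 : (o1 == o2) = false. Proof. by rewrite -val_eqE /= !inordK. Qed.

Section FormPolynomial.
Variable R : realType.
Local Open Scope classical_set_scope.
Local Notation C := R[i].
Implicit Types (Om : form3 R) (w : C).

(* [dz j] is 2 on [wvec w j] and [dzb j] is [2 w]; both vanish on the other
   [wvec w a].  This is where the factor 8 of [wpoly_diagonal_form] comes from. *)
Definition wvec w : 'I_3 -> 'rV[C]_6 := pvec (1 + w) (- 'i * (1 - w)).

Lemma wvec_nondegenerate w : (1 + w != 0) || (- 'i * (1 - w) != 0).
Proof.
rewrite -negb_and; apply/negP => /andP[/eqP w1].
rewrite mulf_eq0 oppr_eq0 (negbTE (neq0Ci _)) /= => /eqP w2; have : (1 + w) + (1 - w) = 2 by ring.
by rewrite w1 w2 addr0 => /eqP; rewrite eq_sym pnatr_eq0.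
Qed.

Definition xy (a : 'I_3) (b : bool) : 'I_6 := if b then yi a else xi a.

Definition wcoef_poly (b : bool) : {poly C} := if b then - 'i *: (1 - 'X) else 1 + 'X.

Lemma wcoef_horner b w :
  (wcoef_poly b).[w] = if b then - 'i * (1 - w) else 1 + w.
Proof. by case: b; rewrite !hornerE. Qed.

Definition wpoly Om : {poly C} :=
  \sum_(b0 : bool) \sum_(b1 : bool) \sum_(b2 : bool)
    (Om (xy o0 b0, xy o1 b1, xy o2 b2) : C) *:
      (wcoef_poly b0 * wcoef_poly b1 * wcoef_poly b2).

Lemma wpoly_horner Om w : (wpoly Om).[w] =
  \sum_(b0 : bool) \sum_(b1 : bool) \sum_(b2 : bool)
    (Om (xy o0 b0, xy o1 b1, xy o2 b2) : C) *
      ((wcoef_poly b0).[w] * (wcoef_poly b1).[w] * (wcoef_poly b2).[w]).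
Proof.
rewrite horner_sum; apply: eq_bigr => b0 _; rewrite horner_sum.
apply: eq_bigr => b1 _; rewrite horner_sum; apply: eq_bigr => b2 _.
by rewrite hornerZ !hornerM.
Qed.

Lemma wpoly_ev3c Om w : (wpoly Om).[w] = ev3c Om (wvec w o0) (wvec w o1) (wvec w o2).
Proof.
have [T1 T2 T3 T4 T5 T6] := ev3c_trilinear Om.
rewrite wpoly_horner !big_bool !wcoef_horner /= /wvec /pvec.
by rewrite !(T1, T2, T3, T4, T5, T6) !ev3c_delta; ring.
Qed.

Lemma size_wpoly Om : (size (wpoly Om) <= 4)%N.
Proof.
have size_wcoef b : (size (wcoef_poly b) <= 2)%N.
  case: b; rewrite ?(leq_trans (size_scale_leq _ _)) // (leq_trans (size_polyD _ _)) //
    ?size_polyN size_polyX size_poly1 //.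
have size_sum_le4 (F : bool -> {poly C}) :
    (forall b, size (F b) <= 4)%N -> (size (\sum_b F b)%R <= 4)%N.
  by move=> F4; rewrite (leq_trans (size_sum _ _ _)) //; apply/bigmax_leqP => b _.
rewrite /wpoly; apply: (size_sum_le4) => b0; apply: (size_sum_le4) => b1.
apply: (size_sum_le4) => b2.
rewrite (leq_trans (size_scale_leq _ _)) //.
have := size_polyMleq (wcoef_poly b0 * wcoef_poly b1) (wcoef_poly b2).
have := size_polyMleq (wcoef_poly b0) (wcoef_poly b1).
have := size_wcoef b0; have := size_wcoef b1; have := size_wcoef b2.
lia.
Qed.

Definition diagonal_form (a b1 b2 b3 c1 c2 c3 d : C) (u v w : 'rV[R]_6) : C :=
         a  * wedge3 (dz o0)  (dz o1)  (dz o2)  u v w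
       + b1 * wedge3 (dzb o0) (dz o1)  (dz o2)  u v w
       + b2 * wedge3 (dz o0)  (dzb o1) (dz o2)  u v w
       + b3 * wedge3 (dz o0)  (dz o1)  (dzb o2) u v w
       + c1 * wedge3 (dz o0)  (dzb o1) (dzb o2) u v w
       + c2 * wedge3 (dzb o0) (dz o1)  (dzb o2) u v w
       + c3 * wedge3 (dzb o0) (dzb o1) (dz o2)  u v w
       + d  * wedge3 (dzb o0) (dzb o1) (dzb o2) u v w.

Definition dz_val (t : bool) : C := if t then 'i else 1.
Definition dzb_val (t : bool) : C := if t then - 'i else 1.

Lemma dz_ebase j k t : dz j (ebase R (xy k t)) = (k == j)%:R * dz_val t.
Proof.
by case: t; rewrite /dz !mxE !eqxx /= ?eq_xi ?eq_yi ?eq_xi_yi ?eq_yi_xi !rmorph_nat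
  (eq_sym j) /=; ring.
Qed.

Lemma dzb_ebase j k t : dzb j (ebase R (xy k t)) = (k == j)%:R * dzb_val t.
Proof.
by case: t; rewrite /dzb !mxE !eqxx /= ?eq_xi ?eq_yi ?eq_xi_yi ?eq_yi_xi !rmorph_nat
  (eq_sym j) /=; ring.
Qed.

Lemma diagonal_form_ebase (a b1 b2 b3 c1 c2 c3 d : C) t0 t1 t2 :
  diagonal_form a b1 b2 b3 c1 c2 c3 d
    (ebase R (xy o0 t0)) (ebase R (xy o1 t1)) (ebase R (xy o2 t2)) =
      a  * (dz_val t0  * dz_val t1  * dz_val t2)
    + b1 * (dzb_val t0 * dz_val t1  * dz_val t2)
    + b2 * (dz_val t0  * dzb_val t1 * dz_val t2)
    + b3 * (dz_val t0  * dz_val t1  * dzb_val t2)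
    + c1 * (dz_val t0  * dzb_val t1 * dzb_val t2)
    + c2 * (dzb_val t0 * dz_val t1  * dzb_val t2)
    + c3 * (dzb_val t0 * dzb_val t1 * dz_val t2)
    + d  * (dzb_val t0 * dzb_val t1 * dzb_val t2).
Proof.
rewrite /diagonal_form /wedge3 !dz_ebase !dzb_ebase (eq_sym o1 o0) (eq_sym o2 o0).
by rewrite (eq_sym o2 o1) !(o0_neq_o1, o0_neq_o2, o1_neq_o2, eqxx) /=; ring.
Qed.

Lemma wpoly_diagonal_form Om (a b1 b2 b3 c1 c2 c3 d : C) :
  (forall u1 u2 u3, ev3 Om u1 u2 u3 = diagonal_form a b1 b2 b3 c1 c2 c3 d u1 u2 u3) ->
  forall w, (wpoly Om).[w] =
    8 * (a + (b1 + b2 + b3) * w + (c1 + c2 + c3) * w ^+ 2 + d * w ^+ 3).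
Proof.
move=> OmE w; rewrite wpoly_horner.
have i2 : 'i * 'i = -1 :> C by rewrite -expr2 sqr_i.
under eq_bigr => t0 _ do under eq_bigr => t1 _ do under eq_bigr => t2 _ do
  rewrite -ev3_ebase OmE diagonal_form_ebase.
by rewrite !big_bool !wcoef_horner /= /dz_val /dzb_val; ring: i2.
Qed.

Definition coef_close Om Om' (e : C) := forall t0 t1 t2,
  `|(Om' (xy o0 t0, xy o1 t1, xy o2 t2) : C) - Om (xy o0 t0, xy o1 t1, xy o2 t2)| <= e.

Lemma wcoef_le2 t w : `|w| <= 1 -> `|(wcoef_poly t).[w]| <= 2.
Proof.
move=> w1; have le2 x : x <= 1 -> 1 + x <= 2 by move=> x1; rewrite -[2]/(1 + 1) lerD2l.
rewrite wcoef_horner; case: t.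
- by rewrite normrM normrN normCi mul1r (le_trans (ler_normB _ _)) // normr1 le2.
- by rewrite (le_trans (ler_normD _ _)) // normr1 le2.
Qed.

Lemma wpoly_close Om Om' e w : coef_close Om Om' e -> `|w| <= 1 ->
  `|(wpoly Om').[w] - (wpoly Om).[w]| <= 64 * e.
Proof.
move=> close w1.
have sum_bool_le (f : bool -> C) c : (forall t, `|f t| <= c) -> `|\sum_t f t| <= 2 * c.
  move=> fc; rewrite big_bool (le_trans (ler_normD _ _)) //.
  by rewrite mulr2n mulrDl mul1r lerD.
have -> : 64 * e = 2 * (2 * (2 * (e * (2 * 2 * 2)))) by ring.
rewrite !wpoly_horner -sumrB; apply: (sum_bool_le) => t0.
rewrite -sumrB; apply: (sum_bool_le) => t1; rewrite -sumrB; apply: (sum_bool_le) => t2.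
rewrite -mulrBl normrM !normrM ler_pM ?mulr_ge0 //.
by rewrite !ler_pM ?wcoef_le2 ?mulr_ge0.
Qed.

Lemma near_coef_close Om e : 0 < e -> \forall Om' \near Om, coef_close Om Om' e.
Proof.
move=> e0.
have near_entry s : \forall Om' \near Om, `|(Om s : C) - (Om' : form3 R) s| < e.
  have : (fun Om' : form3 R => Om' s) @ nbhs Om --> (Om s : C^o).
    exact: (@proj_continuous _ (fun _ => C^o) s Om).
  by move/cvgr_dist_lt => /(_ e e0).
pose entry t (Om' : form3 R) :=
  `|(Om (xy o0 t.1.1, xy o1 t.1.2, xy o2 t.2) : C) - Om' (xy o0 t.1.1, xy o1 t.1.2, xy o2 t.2)| < e.
have near_all : \forall Om' \near Om, forall t, entry t Om'.
  exact: (@filter_forall _ _ entry (nbhs Om) _ (fun t => near_entry _)).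
apply: (filterS _ near_all) => Om' near_Om t0 t1 t2.
by rewrite distrC ltW //; apply: (near_Om (t0, t1, t2)).
Qed.

(* For [|w| = 1] the plane spanned by [wvec w] is [lag_plane p q] complexified. *)
Lemma unit_circle_real_frame (w : C) : `|w| = 1 -> exists mu (p q : R),
  [/\ (p != 0) || (q != 0), mu * (1 + w) = (p%:C)%C & mu * (- 'i * (1 - w)) = (q%:C)%C].
Proof.
case: w => x y; rewrite normc_def /= => /eqP; rewrite eq_complex /= => /andP[/eqP n1 _].
have xy1 : x ^+ 2 + y ^+ 2 = 1.
  by rewrite -[LHS]sqr_sqrtr ?n1 ?expr1n // addr_ge0 ?sqr_ge0.
have [x_eq|x_neq] := eqVneq x (-1).
- rewrite x_eq in xy1 *.
  have -> : y = 0 by apply/eqP; rewrite -sqrf_eq0; apply/eqP; move: xy1; lra.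
  exists 'i, 0, 2; rewrite pnatr_eq0 orbT; split=> //; apply/eqP;
    by rewrite eq_complex /=; apply/andP; split; apply/eqP; lra.
- exists ((1 + x) +i* (- y))%C, ((1 + x) ^+ 2 + y ^+ 2), (- (2 * y)); split.
  + rewrite lt0r_neq0 //; have : 0 < (1 + x) ^+ 2.
      by rewrite exprn_even_gt0 //= addrC addr_eq0.
    by have := sqr_ge0 y; lra.
  + by apply/eqP; rewrite eq_complex /=; apply/andP; split; apply/eqP; ring.
  + by apply/eqP; rewrite eq_complex /=; apply/andP; split; apply/eqP; nra.
Qed.

Lemma U3_wpoly_circle Om w : U3 Om -> `|w| = 1 -> (wpoly Om).[w] != 0.
Proof.
move=> U3Om /unit_circle_real_frame[mu [p [q [pq pE qE]]]].
have := U3_pvec U3Om pq; rewrite ev3c_cvec /cvec !map_pvec /= -pE -qE !pvecZ.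
have [_ T2 _ T4 _ T6] := ev3c_trilinear Om.
by rewrite T2 T4 T6 -wpoly_ev3c; apply: contraNneq => ->; rewrite !mulr0.
Qed.

End FormPolynomial.

Section ComplexStructure.
Variable R : realType.
Local Notation C := R[i].
Local Notation rowC := 'rV[C]_6.
Variable J : 'M[R]_6.
Implicit Types (Y Z : rowC) (w : C).

Definition re Y : 'rV[R]_6 := map_mx (@complex.Re R) Y.
Definition im Y : 'rV[R]_6 := map_mx (@complex.Im R) Y.
Definition Jc : 'M[C]_6 := map_mx (real_complex R) J.
Definition Kmx : 'M[C]_6 := 1%:M + 'i *: Jc.
Definition Wmx w : 'M[C]_(3, 6) := \matrix_a wvec w a.

Lemma re_mulJ Y : re (Y *m Jc) = re Y *m J.
Proof.
have ReD (x y : C) : complex.Re (x + y) = complex.Re x + complex.Re y by case: x; case: y.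
apply/rowP => j; rewrite !mxE (big_morph _ ReD (erefl : complex.Re 0 = 0)).
by apply: eq_bigr => k _; rewrite !mxE; case: (Y 0 k) => a b /=; ring.
Qed.

Lemma re_scaleNi Y : re (- 'i *: Y) = im Y.
Proof. by apply/rowP => j; rewrite !mxE; case: (Y 0 j) => a b /=; ring. Qed.

Lemma type30_ev3c Om : type30 J Om ->
  forall Y1 Y2 Y3, ev3c Om (Y1 *m Jc) Y2 Y3 = 'i * ev3c Om Y1 Y2 Y3.
Proof.
move=> [_ Om30]; have [T1 T2 T3 T4 T5 T6] := ev3c_trilinear Om.
apply: (trilinear_eq_on_real (F := fun Y1 Y2 Y3 => ev3c Om (Y1 *m Jc) Y2 Y3)).
- by split=> * /=; rewrite ?mulmxDl -?scalemxAl ?(T1, T2, T3, T4, T5, T6).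
- by split=> * /=; rewrite ?(T1, T2, T3, T4, T5, T6); ring.
- by move=> u v w /=; rewrite /Jc /cvec -map_mxM -!ev3c_cvec Om30.
Qed.

Lemma type30_ev3c_Kmx Om Z Y2 Y3 : type30 J Om -> ev3c Om (Z *m Kmx) Y2 Y3 = 0.
Proof.
move=> Om30; have [T1 T2 _ _ _ _] := ev3c_trilinear Om.
rewrite mulmxDr mulmx1 -scalemxAr T1 T2 type30_ev3c // mulrA -expr2 sqr_i; ring.
Qed.

Lemma Wmx_mul w (c : 'rV[C]_3) : c *m Wmx w = \sum_a c 0 a *: wvec w a.
Proof. by rewrite mulmx_sum_row; apply: eq_bigr => a _; rewrite rowK. Qed.

Lemma rank_Wmx w : \rank (Wmx w) = 3.
Proof.
apply/eqP; rewrite -[_ == _]/(row_free _) -kermx_eq0; apply/eqP/row_matrixP => i.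
rewrite row0; apply/rowP => a; rewrite [RHS]mxE.
apply: (pvec_free (wvec_nondegenerate w) (k := fun a => row i (kermx (Wmx w)) 0 a)).
by rewrite -Wmx_mul -row_mul mulmx_ker row0.
Qed.

Lemma omega_re_im_Wmx_le0 w c : `|w| <= 1 -> omega (re (c *m Wmx w)) (im (c *m Wmx w)) <= 0.
Proof.
case: w => x y; rewrite normc_def lecE /= => /andP[_ xy1].
have {xy1} xy1 : x ^+ 2 + y ^+ 2 <= 1.
  by rewrite -(sqr_sqrtr (addr_ge0 (sqr_ge0 x) (sqr_ge0 y))) exprn_ile1.
rewrite Wmx_mul /omega; apply: sumr_le0 => j _.
rewrite !mxE !sum_pvec_xi !sum_pvec_yi; case: (c 0 j) => a b /=.
have := sqr_ge0 a; have := sqr_ge0 b; nra.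
Qed.

Section Compatible.
Hypothesis J_cs : compatible_cs J.

Lemma Kmx_mulJ : Kmx *m Jc = - 'i *: Kmx.
Proof.
have [J2 _ _] := J_cs.
rewrite mulmxDl mul1mx -scalemxAl /Jc -map_mxM J2 map_mxN map_mx1 scalerN scaleNr.
by rewrite /Kmx scalerDr scalerA -expr2 sqr_i scaleN1r opprD opprK addrC.
Qed.

Lemma omega_re_im_gt0 Y : Y *m Jc = - 'i *: Y -> Y != 0 -> 0 < omega (re Y) (im Y).
Proof.
have [_ _ J_pos] := J_cs; move=> YJ Y0.
have reJ : re Y *m J = im Y by rewrite -re_mulJ YJ re_scaleNi.
rewrite -reJ J_pos //; apply: contraNneq Y0 => re0.
by rewrite (cvec_re_im Y) -/(re Y) -/(im Y) -reJ re0 mul0mx /cvec !map_mx0 scaler0 addr0.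
Qed.

Lemma Kmx_cap_Wmx w : `|w| <= 1 -> (Kmx :&: Wmx w)%MS = 0.
Proof.
move=> w1; apply/eqP; rewrite -submx0; apply/rV_subP => Y.
rewrite sub_capmx submx0 => /andP[/submxP[Z YK] /submxP[c YW]].
apply: contraT => Y0.
have YJ : Y *m Jc = - 'i *: Y by rewrite YK -mulmxA Kmx_mulJ scalemxAr.
by have := omega_re_im_gt0 YJ Y0; rewrite YW ltNge omega_re_im_Wmx_le0.
Qed.

Lemma rank_Kmx_ge3 : (3 <= \rank Kmx)%N.
Proof.
have KKc : Kmx + map_mx Num.conj_op Kmx = 2%:M.
  apply/matrixP => i j; rewrite !mxE rmorphD rmorphM /= conjCi rmorph_nat.
  have -> : ((J i j)%:C%C)^* = (J i j)%:C%C by apply/eqP; rewrite eq_complex /= oppr0 !eqxx.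
  by rewrite -mulr_natl; ring.
have : (1%:M <= Kmx + map_mx Num.conj_op Kmx)%MS.
  have -> : 1%:M = 2^-1 *: (Kmx + map_mx Num.conj_op Kmx) :> 'M[C]_6.
    by rewrite KKc -[X in _ *: X]scalemx1 scalerA mulVf ?pnatr_eq0 ?scale1r.
  by rewrite scalemx_sub // addmx_sub_adds.
move/mxrankS; rewrite mxrank1 => /leq_trans/(_ (mxrank_adds_leqif _ _).1).
by rewrite mxrank_map; set r := \rank Kmx; lia.
Qed.

Lemma Kmx_Wmx_full w : `|w| <= 1 -> forall Y : rowC, exists Z c, Y = Z *m Kmx + c *m Wmx w.
Proof.
move=> w1 Y.
have KW_full : row_full (Kmx + Wmx w)%MS.
  have := mxrank_disjoint_sum (Kmx_cap_Wmx w1); rewrite rank_Wmx => rankKW.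
  have := rank_Kmx_ge3; have := rank_leq_col (Kmx + Wmx w)%MS.
  by rewrite /row_full; lia.
by have /sub_addsmxP[[Z c] ->] := submx_full Y KW_full; exists Z, c.
Qed.

Lemma type30_disk_zero_free Om : type30 J Om -> U3 Om -> disk_zero_free (wpoly Om).
Proof.
move=> Om30 U3Om w w1; apply/eqP => Qw0.
have [Om_alt _ _] := U3Om; have [F12 F23] := ev3c_alternating Om_alt.
have [T1 _ T3 _ T5 _] := ev3c_trilinear Om.
have Om_K1 Z Y2 Y3 := type30_ev3c_Kmx Z Y2 Y3 Om30.
have Om0 Y1 Y2 Y3 : ev3c Om Y1 Y2 Y3 = 0.
  have [Z1 [c1 ->]] := Kmx_Wmx_full w1 Y1; have [Z2 [c2 ->]] := Kmx_Wmx_full w1 Y2.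
  have [Z3 [c3 ->]] := Kmx_Wmx_full w1 Y3.
  rewrite T1 Om_K1 add0r T3 F12 Om_K1 oppr0 add0r T5 F23 F12 Om_K1 !oppr0 add0r.
  rewrite !Wmx_mul; apply: alternating_span0; first exact: ev3c_trilinear.
    exact: ev3c_alternating.
  by rewrite -wpoly_ev3c.
have := U3_pvec U3Om (p := 1) (q := 0); rewrite oner_neq0 ev3c_cvec Om0 eqxx.
by rewrite eqxx => /(_ isT).
Qed.

End Compatible.
End ComplexStructure.

Section ZeroFreeForms.
Variable R : realType.
Local Open Scope classical_set_scope.
Local Notation C := R[i].

Definition zero_free_forms : set (form3 R) := [set Om | disk_zero_free (wpoly Om)].

Lemma open_zero_free_forms : open zero_free_forms.
Proof.
rewrite openE => Om /disk_zero_free_near[e e0 near_zf].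
have e64 : 0 < e / 64 :> C by rewrite divr_gt0.
apply: filterS (near_coef_close Om e64) => Om' close; apply: near_zf => v v1.
by rewrite (le_trans (wpoly_close close v1)) // mulrC divfK ?pnatr_eq0.
Qed.

Lemma closure_zero_free_forms Om : U3 Om -> closure zero_free_forms Om -> zero_free_forms Om.
Proof.
move=> U3Om Om_cl w w1; apply/eqP => Qw0.
have [w_circ|w_lt1] : `|w| = 1 \/ `|w| < 1 by move: w1; rewrite le_eqVlt => /orP[/eqP|]; auto.
  by have := U3_wpoly_circle U3Om w_circ; rewrite Qw0 eqxx.
have Q1 : (wpoly Om).[1] != 0 by apply: U3_wpoly_circle U3Om _; rewrite normr1.
set e := ((1 - `|w|) / 2) ^+ 3 * `|(wpoly Om).[1]| / 4.
have e64 : 0 < e / 64.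
  by rewrite !divr_gt0 ?mulr_gt0 ?normr_gt0 ?exprn_gt0 ?divr_gt0 ?subr_gt0.
have [Om' [Om'_zf close]] := Om_cl _ (near_coef_close Om e64).
apply/negP: Q1; rewrite negbK; apply/eqP.
apply: (disk_zero_free_approx_root (size_wpoly Om') Om'_zf w_lt1 Qw0) => v v1.
by rewrite (le_trans (wpoly_close close v1)) // mulrC divfK ?pnatr_eq0.
Qed.

Lemma Uplus3_zero_free Om : Uplus3 Om -> zero_free_forms Om.
Proof.
move=> [J [Om0 [J_cs Om0_30 [CC [CC_Om0 CC_U3 CC_conn] CC_Om]]]].
have CC_zf : CC `&` zero_free_forms = CC.
  apply: CC_conn.
  - exists Om0; split=> //.
    exact: (type30_disk_zero_free J_cs Om0_30 (CC_U3 _ CC_Om0)).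
  - by exists zero_free_forms => //; exact: open_zero_free_forms.
  - exists (closure zero_free_forms); first exact: closed_closure.
    apply/seteqP; split=> Om' [CC_Om' Om'_zf]; split=> //.
    + exact: subset_closure.
    + exact: closure_zero_free_forms (CC_U3 _ CC_Om') Om'_zf.
by have [] : (CC `&` zero_free_forms) Om by rewrite CC_zf.
Qed.

End ZeroFreeForms.

Theorem lemma5p2 (R : realType) (Om : form3 R)
    (a b1 b2 b3 c1 c2 c3 d : R[i]) :
  Uplus3 Om ->
  (forall u v w : 'rV[R]_6,
     ev3 Om u v w =
         a  * wedge3 (dz o0)  (dz o1)  (dz o2)  u v w
       + b1 * wedge3 (dzb o0) (dz o1)  (dz o2)  u v w
       + b2 * wedge3 (dz o0)  (dzb o1) (dz o2)  u v w
       + b3 * wedge3 (dz o0)  (dz o1)  (dzb o2) u v w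
       + c1 * wedge3 (dz o0)  (dzb o1) (dzb o2) u v w
       + c2 * wedge3 (dzb o0) (dz o1)  (dzb o2) u v w
       + c3 * wedge3 (dzb o0) (dzb o1) (dz o2)  u v w
       + d  * wedge3 (dzb o0) (dzb o1) (dzb o2) u v w) ->
  a != 0 /\
  (forall z : R[i],
     root (a *: 'X^3 + (b1 + b2 + b3) *: 'X^2 + (c1 + c2 + c3) *: 'X + d%:P) z ->
     `|z| < 1) /\
  `|d / a| < 1.
Proof.
move=> /Uplus3_zero_free Om_zf /wpoly_diagonal_form QE.
apply: reversed_cubic_zero_free => w /Om_zf.
by rewrite QE mulf_eq0 negb_or => /andP[].
Qed.
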